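(* Let $X$ be a nonempty finite set. For all $\kappa,\lambda,\mu,\nu\in\mathcal{D}(X)$ and every $\omega\in\Omega(\lambda,\mu)$, there exist $\pi\in\Omega(\kappa,\mu)$ and $\rho\in\Omega(\lambda,\nu)$ such that $d_{TV}(\omega,\pi)\le d_{TV}(\kappa,\lambda)$ and $d_{TV}(\omega,\rho)\le d_{TV}(\mu,\nu)$.
   Context: $\mathcal{D}(Y)$ is the set of probability distributions on a finite set $Y$. $\Omega(\mu,\nu)=\{\omega\in\mathcal{D}(X\times X)\mid\forall x:\sum_y\omega(x,y)=\mu(x),\ \sum_y\omega(y,x)=\nu(x)\}$. For distributions $\alpha,\beta$ on a finite set $Y$ (here $Y=X$ or $Y=X\times X$), $d_{TV}(\alpha,\beta)=\max_{y\in Y}|\alpha(y)-\beta(y)|$ (a maximum pointwise difference, not the usual total variation). *)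

From HB Require Import structures.
From mathcomp Require Import all_boot all_order all_algebra.
From mathcomp Require Import reals.
Set Implicit Arguments. Unset Strict Implicit. Unset Printing Implicit Defensive.
Import Order.TTheory GRing.Theory Num.Theory.
Local Open Scope ring_scope.

Definition is_dist (R : realType) (Y : finType) (a : Y -> R) : Prop :=
  (forall y, 0 <= a y) /\ \sum_(y : Y) a y = 1.

Definition is_coupling (R : realType) (X : finType) (mu nu : X -> R)
    (w : X * X -> R) : Prop :=
  is_dist w /\
  (forall x, \sum_(y : X) w (x, y) = mu x) /\
  (forall x, \sum_(y : X) w (y, x) = nu x).

Definition dTV (R : realType) (Y : finType) (a b : Y -> R) : R :=
  \big[Num.max/0]_(y : Y) `|a y - b y|.

From HB Require Import structures.
From mathcomp Require Import all_boot all_order all_algebra.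
From mathcomp Require Import reals.
From mathcomp Require Import lra.
Import Order.TTheory GRing.Theory Num.Theory.
Local Open Scope ring_scope.

(* Rebuild the first marginal of the coupling omega of lambda and mu row by
   row.  From row x remove the excess (lambda x - kappa x)^+, taken in
   proportion to the entries of the row; the removed mass of column y is then
   handed back to column y, spread over the rows in proportion to the
   shortfall (kappa x - lambda x)^+.  Excess and shortfall have the same total
   since kappa and lambda both sum to 1, so the column sums are unchanged, and
   entry (x, y) moves by at most the larger of the two, i.e. by
   |kappa x - lambda x|.  Transposing handles the second marginal. *)

Section PairSums.
Context {R : realType} {X : finType}.

Lemma sum_pairE (w : X * X -> R) : \sum_p w p = \sum_x \sum_y w (x, y).
Proof. by rewrite pair_big; apply: eq_bigr => -[]. Qed.

Lemma sum_pair_swap (w : X * X -> R) : \sum_p w (p.2, p.1) = \sum_p w p.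
Proof. by rewrite !sum_pairE exchange_big. Qed.

Lemma coupling_of_marginals (mu nu : X -> R) (w : X * X -> R) :
  is_dist mu -> (forall p, 0 <= w p) ->
  (forall x, \sum_y w (x, y) = mu x) -> (forall y, \sum_x w (x, y) = nu y) ->
  is_coupling mu nu w.
Proof.
move=> [_ mu1] w0 wr wc; split; [split|split] => //.
by rewrite sum_pairE (eq_bigr _ (fun x _ => wr x)).
Qed.

Lemma is_coupling_swap {mu nu : X -> R} {w : X * X -> R} :
  is_coupling mu nu w -> is_coupling nu mu (fun p => w (p.2, p.1)).
Proof.
move=> [[w0 w1] [wr wc]]; split; [split|split] => //.
by rewrite sum_pair_swap.
Qed.

End PairSums.

Lemma dTV_ge0 (R : realType) (Y : finType) (a b : Y -> R) : 0 <= dTV a b.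
Proof. exact: bigmax_ge_id. Qed.

Lemma dTV_le_comp (R : realType) (Y Z : finType) (g : Y -> Z)
    (a b : Y -> R) (c d : Z -> R) :
  (forall y, `|a y - b y| <= `|c (g y) - d (g y)|) -> dTV a b <= dTV c d.
Proof.
move=> le_acd; apply: bigmax_le => [|y _]; first exact: dTV_ge0.
exact: le_trans (le_acd y) (le_bigmax _ (fun z => `|c z - d z|) (g y)).
Qed.

Section ReplaceFirstMarginal.
Context {R : realType} {X : finType} {kappa lambda mu : X -> R}.
Context {omega : X * X -> R}.
Hypotheses (kappa_dist : is_dist kappa) (lambda_dist : is_dist lambda).
Hypothesis omega_coupling : is_coupling lambda mu omega.

Local Definition excess x := Num.max 0 (lambda x - kappa x).
Local Definition shortfall x := excess x + (kappa x - lambda x).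
Local Definition removed x y := omega (x, y) * excess x / lambda x.
Local Definition removed_col y := \sum_x removed x y.
Local Definition total := \sum_x excess x.
Local Definition rebuilt (p : X * X) :=
  omega p - removed p.1 p.2 + shortfall p.1 * removed_col p.2 / total.

Let omega_ge0 p : 0 <= omega p. Proof. by case: omega_coupling => -[]. Qed.
Let omega_row x : \sum_y omega (x, y) = lambda x.
Proof. by case: omega_coupling => _ []. Qed.
Let omega_col y : \sum_x omega (x, y) = mu y.
Proof. by case: omega_coupling => _ []. Qed.

Let excess_ge0 x : 0 <= excess x. Proof. by rewrite le_max lexx. Qed.

Let shortfall_ge0 x : 0 <= shortfall x.
Proof.
by rewrite /shortfall /excess; case: (lerP 0 (lambda x - kappa x)) => h; lra.
Qed.

Let excess_le_lambda x : excess x <= lambda x.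
Proof.
rewrite /excess ge_max lerBlDr lerDl; apply/andP; split.
- exact: lambda_dist.1.
- exact: kappa_dist.1.
Qed.

Let excess_shortfall_le_dist x :
  Num.max (excess x) (shortfall x) <= `|kappa x - lambda x|.
Proof.
have := ler_norm (kappa x - lambda x); have := ler_norm (lambda x - kappa x).
rewrite distrC /shortfall /excess ge_max.
by case: (lerP 0 (lambda x - kappa x)) => h *; apply/andP; split; lra.
Qed.

Let total_shortfall : \sum_x shortfall x = total.
Proof.
rewrite big_split /= sumrB (proj2 kappa_dist) (proj2 lambda_dist).
by rewrite subrr addr0.
Qed.

Let removed_ge0 x y : 0 <= removed x y.
Proof. by rewrite /removed !mulr_ge0 ?invr_ge0 ?(proj1 lambda_dist). Qed.

Let removed_le x y : removed x y <= omega (x, y) /\ removed x y <= excess x.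
Proof.
rewrite /removed; have [->|lambda_neq0] := eqVneq (lambda x) 0.
  by rewrite invr0 mulr0.
have lambda_gt0 : 0 < lambda x.
  by rewrite lt_def lambda_neq0 (proj1 lambda_dist).
split; first by rewrite -mulrA ler_piMr // ler_pdivrMr // mul1r.
rewrite ler_pdivrMr // mulrC ler_wpM2l //.
by rewrite -omega_row (bigD1 y) //= lerDl sumr_ge0.
Qed.

Let removed_row x : \sum_y removed x y = excess x.
Proof.
rewrite -!mulr_suml omega_row.
have [lambda0|lambda_neq0] := eqVneq (lambda x) 0; last by rewrite mulrC mulKf.
have := excess_le_lambda x; have := excess_ge0 x.
by rewrite lambda0 invr0 mulr0; lra.
Qed.

Let total_removed_col : \sum_y removed_col y = total.
Proof. by rewrite exchange_big; apply: eq_bigr => x _; apply: removed_row. Qed.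

Let removed_col_ge0 y : 0 <= removed_col y. Proof. exact: sumr_ge0. Qed.

Let removed_col_le_total y : removed_col y <= total.
Proof. by apply: ler_sum => x _; case: (removed_le x y). Qed.

Let moved_ge0 x y : 0 <= shortfall x * removed_col y / total.
Proof. by rewrite !mulr_ge0 ?invr_ge0 ?sumr_ge0. Qed.

Let moved_le x y : shortfall x * removed_col y / total <= shortfall x.
Proof.
have [->|total_neq0] := eqVneq total 0; first by rewrite invr0 mulr0.
have total_gt0 : 0 < total by rewrite lt_def total_neq0 sumr_ge0.
by rewrite -mulrA ler_piMr // ler_pdivrMr // mul1r.
Qed.

Let rebuilt_row x : \sum_y rebuilt (x, y) = kappa x.
Proof.
rewrite big_split sumrB /= omega_row removed_row -mulr_suml -mulr_sumr.
rewrite total_removed_col.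
have [total0|total_neq0] := eqVneq total 0; last first.
  by rewrite mulfK // /shortfall; lra.
have excess0 : excess x = 0.
  exact: (psumr_eq0P (fun i _ => excess_ge0 i) total0).
have shortfall0 : shortfall x = 0.
  have total_shortfall0 := etrans total_shortfall total0.
  exact: (psumr_eq0P (fun i _ => shortfall_ge0 i) total_shortfall0).
rewrite total0 invr0 mulr0 excess0.
by move: shortfall0; rewrite /shortfall excess0; lra.
Qed.

Let rebuilt_col y : \sum_x rebuilt (x, y) = mu y.
Proof.
rewrite big_split sumrB /= omega_col -/(removed_col y).
rewrite -!mulr_suml total_shortfall.
have [total0|total_neq0] := eqVneq total 0.
  have := removed_col_le_total y; have := removed_col_ge0 y.
  by rewrite total0; lra.
by rewrite mulrC mulKf // subrK.
Qed.

Lemma coupling_replace_first_marginal :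
  exists pi : X * X -> R, is_coupling kappa mu pi /\
    forall x y, `|omega (x, y) - pi (x, y)| <= `|kappa x - lambda x|.
Proof.
exists rebuilt; split.
  apply: coupling_of_marginals rebuilt_row rebuilt_col => // -[x y].
  by rewrite /rebuilt /=; have := moved_ge0 x y; case: (removed_le x y); lra.
move=> x y; apply: le_trans (excess_shortfall_le_dist x).
set M := Num.max _ _.
have excess_le : excess x <= M by rewrite le_max lexx.
have shortfall_le : shortfall x <= M by rewrite le_max lexx orbT.
rewrite /rebuilt /= ler_norml; have := moved_ge0 x y; have := moved_le x y.
have := removed_ge0 x y; case: (removed_le x y) => _ removed_le_excess *.
by apply/andP; split; lra.
Qed.

End ReplaceFirstMarginal.

Theorem lemma2 (R : realType) (X : finType) (hX : (0 < #|X|)%N)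
    (kappa lambda mu nu : X -> R) (omega : X * X -> R) :
  is_dist kappa -> is_dist lambda -> is_dist mu -> is_dist nu ->
  is_coupling lambda mu omega ->
  exists pi rho : X * X -> R,
    [/\ is_coupling kappa mu pi, is_coupling lambda nu rho,
        dTV omega pi <= dTV kappa lambda &
        dTV omega rho <= dTV mu nu].
Proof.
move=> kappa_dist lambda_dist mu_dist nu_dist omega_coupling.
have [pi [pi_coupling pi_close]] :=
  coupling_replace_first_marginal kappa_dist lambda_dist omega_coupling.
have [rho' [rho'_coupling rho'_close]] :=
  coupling_replace_first_marginal nu_dist mu_dist
    (is_coupling_swap omega_coupling).
exists pi, (fun p => rho' (p.2, p.1)); split.
- exact: pi_coupling.
- exact: is_coupling_swap rho'_coupling.
- by apply: (@dTV_le_comp _ _ _ fst omega) => -[x y]; apply: pi_close.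
- apply: (@dTV_le_comp _ _ _ snd omega) => -[x y] /=; rewrite (distrC (mu y)).
  exact: rho'_close.
Qed.
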